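(* Let $A$ be a complete Boolean algebra, $Z$ an open dense subset of $\mathrm{Ult}(A)$, and $p:Z\to Y$ a perfect irreducible map onto a locally compact Hausdorff space $Y$. Then $\rho_p(\mathrm{KO}(Z))=\mathrm{CR}(Y)$.
   Context: $\mathrm{Ult}(A)$ is the Stone space of ultrafilters of $A$. $\mathrm{KO}(Z)$ is the set of compact open subsets of $Z$; $\mathrm{RC}(X)$ is the set of regular closed subsets of a space $X$ and $\mathrm{CR}(X)$ the set of compact regular closed subsets. $\rho_p:\mathrm{RC}(Z)\to\mathrm{RC}(Y)$ is $H\mapsto p(H)$. A perfect map is continuous, closed, with compact fibres; irreducible means continuous surjective with no proper closed subset of the domain mapped onto the codomain. *)

From HB Require Import structures.
From mathcomp Require Import all_boot all_order.
From mathcomp Require Import boolp classical_sets topology.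
Set Implicit Arguments. Unset Strict Implicit. Unset Printing Implicit Defensive.
Import Order.TTheory.
Local Open Scope classical_set_scope.

Section Boolean.
Context {disp : Order.disp_t} (A : ctbDistrLatticeType disp).

Definition complete_BA : Prop := forall S : set A, supremums S !=set0.

Definition BA_filter (F : set A) : Prop :=
  [/\ F \top%O,
      (forall a b : A, F a -> (a <= b)%O -> F b) &
      (forall a b : A, F a -> F b -> F (Order.meet a b))].

Definition BA_proper_filter (F : set A) : Prop := BA_filter F /\ ~ F \bot%O.

Definition BA_ultrafilter (F : set A) : Prop :=
  BA_proper_filter F /\ forall G, BA_proper_filter G -> F `<=` G -> G = F.

Record Ult := MkUlt { uf :> set A ; uf_ultra : BA_ultrafilter uf }.

HB.instance Definition _ := gen_eqMixin Ult.
HB.instance Definition _ := gen_choiceMixin Ult.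

Definition stone_basic (a : A) : set Ult := [set u | uf u a].

Definition stone_open (U : set Ult) : Prop :=
  forall u, U u -> exists a, uf u a /\ stone_basic a `<=` U.

Lemma stone_openT : stone_open setT.
Proof.
move=> u _; exists \top%O; split => //.
by case: (uf_ultra u) => -[[]].
Qed.

Lemma stone_openI : setI_closed stone_open.
Proof.
move=> U V oU oV u [Uu Vu].
have [a [ua sa]] := oU u Uu; have [b [ub sb]] := oV u Vu.
exists (Order.meet a b); split.
  by case: (uf_ultra u) => -[[_ _ hm] _] _; apply: hm.
move=> v vab; split.
  by apply: sa; case: (uf_ultra v) => -[[_ hup _] _] _; apply: (hup _ _ vab); exact: leIl.
by apply: sb; case: (uf_ultra v) => -[[_ hup _] _] _; apply: (hup _ _ vab); exact: leIr.
Qed.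

Lemma stone_open_bigU (I : Type) (f : I -> set Ult) :
  (forall i, stone_open (f i)) -> stone_open (\bigcup_i f i).
Proof.
move=> hf u [i _ fiu]; have [a [ua sa]] := hf i u fiu.
by exists a; split => // v /sa fv; exists i.
Qed.

HB.instance Definition _ := isOpenTopological.Build Ult
  stone_openT stone_openI stone_open_bigU.

End Boolean.

Section Spaces.
Context {X Y : topologicalType}.

Definition closed_in (Z C : set X) : Prop := exists C', closed C' /\ C = Z `&` C'.
Definition open_in (Z K : set X) : Prop := exists U, open U /\ K = Z `&` U.

Definition perfect_on (Z : set X) (p : X -> Y) : Prop :=
  [/\ {within Z, continuous p},
      (forall C, closed_in Z C -> closed (p @` C)) &
      (forall y : Y, compact (Z `&` p @^-1` [set y]))].

Definition irreducible_on (Z : set X) (p : X -> Y) : Prop :=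
  [/\ {within Z, continuous p}, p @` Z = [set: Y] &
      (forall C, closed_in Z C -> C `<=` Z -> p @` C = [set: Y] -> C = Z)].

Definition KO (Z : set X) : set (set X) :=
  [set K | K `<=` Z /\ open_in Z K /\ compact K].

Definition CR : set (set Y) :=
  [set H | closure (interior H) = H /\ compact H].

Definition rho (p : X -> Y) (H : set X) : set Y := p @` H.

End Spaces.

From mathcomp Require Import all_boot all_order.
From mathcomp Require Import boolp classical_sets topology.
Set Implicit Arguments. Unset Strict Implicit. Unset Printing Implicit Defensive.
Local Open Scope classical_set_scope.
Import Order.Theory.

(* Since A is complete, Ult(A) is extremally disconnected: the closure of an
   open set O is the clopen set of the supremum of all a with [a] ⊆ O.
   For a compact open K = Z ∩ O, the image p(K) is compact, hence closed.
   Irreducibility puts a whole fibre of p inside every nonempty open subset of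
   Z; the fibres inside O are mapped into the open set Y \ p(Z \ O) ⊆ p(K),
   so every point of p(K) is a limit of interior points.  Conversely, for
   H ∈ CR(Y) let V = Z ∩ p⁻¹(int H); then K = Z ∩ cl V is open, and it is a
   closed subset of the compact set Z ∩ p⁻¹(H) because p is perfect.  Its
   image is closed, lies in H and contains int H, so it is cl(int H) = H. *)

Section Stone.
Context {disp : Order.disp_t} (A : ctbDistrLatticeType disp).
Implicit Types (a b c : A) (u : Ult A).
Local Open Scope order_scope.

Lemma uf_top u : uf u \top.
Proof. by case: (uf_ultra u) => -[[]]. Qed.

Lemma uf_up u a b : uf u a -> a <= b -> uf u b.
Proof. by case: (uf_ultra u) => -[[_ h _] _] _; apply: h. Qed.

Lemma uf_meet u a b : uf u a -> uf u b -> uf u (a `&` b).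
Proof. by case: (uf_ultra u) => -[[_ _ h] _] _; apply: h. Qed.

Lemma uf_bot u : ~ uf u \bot.
Proof. by case: (uf_ultra u) => -[_ h] _. Qed.

Lemma uf_max u G : BA_proper_filter G -> uf u `<=` G -> G = uf u.
Proof. by case: (uf_ultra u) => _ h; apply: h. Qed.

Lemma uf_or_compl u a : uf u a \/ uf u (~` a).
Proof.
have [uCa|nuCa] := pselect (uf u (~` a)); [by right|left].
pose G := [set x | exists2 f, uf u f & f `&` a <= x].
have uG : uf u `<=` G by move=> x ux; exists x => //; exact: leIl.
have PG : BA_proper_filter G.
  split; first split.
  - by exists \top; [exact: uf_top|exact: lex1].
  - by move=> x y [f uf_f fx] xy; exists f => //; exact: le_trans xy.
  - move=> x y [f uf_f fx] [g uf_g gy]; exists (f `&` g); first exact: uf_meet.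
    rewrite lexI; apply/andP; split.
      by apply: le_trans fx; apply: leI2 => //; exact: leIl.
    by apply: le_trans gy; apply: leI2 => //; exact: leIr.
  - by move=> [f uf_f]; rewrite lex0 disj_leC => fa; apply: nuCa; exact: uf_up fa.
rewrite -(uf_max PG uG).
by exists \top; [exact: uf_top|exact: leIr].
Qed.

(* The last clause, rather than [F c], makes the union of the empty chain
   qualify, as Zorn_bigcup requires. *)
Let filter_through c (F : set A) : Prop :=
  [/\ (forall a b, F a -> a <= b -> F b),
      (forall a b, F a -> F b -> F (a `&` b)), ~ F \bot & (F !=set0 -> F c)].

Let filter_through_bigcup c (F : set (set A)) :
  F `<=` filter_through c -> total_on F subset ->
  filter_through c (\bigcup_(X in F) X).
Proof.
move=> FP tot; split.
- move=> a b [X FX Xa] ab; exists X => //.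
  by have [up _ _ _] := FP _ FX; exact: up ab.
- move=> a b [X FX Xa] [Y FY Yb].
  have [XY|YX] := tot _ _ FX FY.
    by exists Y => //; have [_ mI _ _] := FP _ FY; exact: mI (XY _ Xa) Yb.
  by exists X => //; have [_ mI _ _] := FP _ FX; exact: mI Xa (YX _ Yb).
- by move=> [X FX Xbot]; have [_ _ nbot _] := FP _ FX; exact: nbot.
- move=> [a [X FX Xa]]; exists X => //.
  by have [_ _ _ Xc] := FP _ FX; apply: Xc; exists a.
Qed.

Lemma uf_exists c : c != \bot -> exists u : Ult A, uf u c.
Proof.
move=> c0.
have [M [[Mup Mmeet Mbot Mc] maxM]] := Zorn_bigcup (@filter_through_bigcup c).
have Mc' : M c.
  apply: Mc; apply/set0P/negP => /eqP M0.
  apply: (maxM [set x | c <= x]).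
    by rewrite M0; split => // /(_ c (lexx c)).
  split.
  - by move=> a b /= ca ab; exact: le_trans ab.
  - by move=> a b /= ca cb; rewrite lexI ca cb.
  - by rewrite /= lex0; apply/negP.
  - by move=> _ /=.
have PM : BA_proper_filter M by split => //; split => //; exact: Mup Mc' (lex1 c).
have UM : BA_ultrafilter M.
  split => // G [[Gtop Gup Gmeet] Gbot] MG.
  apply/seteqP; split => //; apply: contrapT => nGM.
  by apply: (maxM G); [split|split=> // _; exact: MG Mc'].
by exists (MkUlt UM).
Qed.

Lemma open_stone_basic a : open (stone_basic a).
Proof. by move=> u ua; exists a; split. Qed.

Lemma stone_basicC a : stone_basic (~` a) = setC (stone_basic a).
Proof.
apply/seteqP; split => u /=.
  by move=> uCa ua; apply: (@uf_bot u); rewrite -(meetxC a); exact: uf_meet.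
by case: (uf_or_compl u a).
Qed.

Lemma subset_stone_basic a b : stone_basic a `<=` stone_basic b <-> a <= b.
Proof.
split=> [ab|ab u ua]; last exact: uf_up ab.
apply: contrapT => /negP nab.
have /uf_exists [u uaCb] : a `&` ~` b != \bot by rewrite disj_leC complK.
have: stone_basic (~` b) u by apply: uf_up uaCb _; exact: leIr.
by rewrite stone_basicC; apply; apply/ab/(uf_up uaCb)/leIl.
Qed.

Lemma nbhs_stone_basic u (W : set (Ult A)) :
  nbhs u W -> exists2 b, uf u b & stone_basic b `<=` W.
Proof.
rewrite nbhsE => -[B [oB Bu] BW].
by have [b [ub bB]] := oB u Bu; exists b => //; exact: subset_trans BW.
Qed.

Lemma closure_open_stone_basic (O : set (Ult A)) s :
  open O -> supremums [set a | stone_basic a `<=` O] s ->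
  closure O = stone_basic s.
Proof.
move=> oO [ub_s lub_s]; apply/seteqP; split => u.
  move=> clu; apply: contrapT => nus.
  have uCs : stone_basic (~` s) u by rewrite stone_basicC.
  have /clu [v [Ov vCs]] : nbhs u (stone_basic (~` s)).
    by apply: open_nbhs_nbhs; split => //; exact: open_stone_basic.
  have [a [va aO]] := oO v Ov.
  by move: vCs; rewrite /= stone_basicC; apply; apply: uf_up va (ub_s a aO).
move=> us W /nbhs_stone_basic [b ub bW].
apply: contrapT => noW.
have sCb : s <= ~` b.
  apply: lub_s => a aO; apply/subset_stone_basic; rewrite stone_basicC.
  by move=> v va vb; apply: noW; exists v; split; [exact: aO|exact: bW].
by move/subset_stone_basic: sCb => /(_ u us); rewrite stone_basicC.
Qed.

End Stone.

Definition extremally_disconnected (T : topologicalType) : Prop :=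
  forall O : set T, open O -> open (closure O).

Lemma Ult_extremally_disconnected {disp : Order.disp_t}
    (A : ctbDistrLatticeType disp) :
  complete_BA A -> extremally_disconnected (Ult A).
Proof.
move=> cA O oO; have [s sup_s] := cA [set a | stone_basic a `<=` O].
by rewrite (closure_open_stone_basic oO sup_s); exact: open_stone_basic.
Qed.

Section PerfectMaps.
Context {X Y : topologicalType} (Z : set X) (p : X -> Y).

Lemma closed_map_fibre_meets_closure (F : set_system X) (y : Y) (B : set X) :
  (forall C, closed_in Z C -> closed (p @` C)) -> Filter F -> F Z ->
  cluster (p @ F) y -> F B -> Z `&` p @^-1` [set y] `&` closure B !=set0.
Proof.
move=> pcl FF FZ cly FB; apply: contrapT => noFB.
have clQ : closed (p @` (Z `&` closure B)).
  by apply: pcl; exists (closure B); split => //; exact: closed_closure.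
have nQy : ~ (p @` (Z `&` closure B)) y.
  by move=> [x [Zx clBx] pxy]; apply: noFB; exists x.
have FpZB : F (p @^-1` (p @` (Z `&` B))).
  by apply: filterS (filterI FZ FB) => x ZBx; exists x.
have nbhs_nQ : nbhs y (~` p @` (Z `&` closure B)).
  by apply: open_nbhs_nbhs; split => //; exact: closed_openC.
have [_ [[x [Zx Bx] <-]]] := cly _ _ FpZB nbhs_nQ.
by apply; exists x => //; split => //; exact: subset_closure.
Qed.

Lemma perfect_preimage_compact (H : set Y) :
  perfect_on Z p -> compact H -> compact (Z `&` p @^-1` H).
Proof.
move=> [_ pcl pfib] cH F PF FZH.
have FpH : F (p @^-1` H) by apply: filterS FZH => x [].
have [y [Hy cly]] := cH _ (fmap_proper_filter p PF) FpH.
pose G := filter_from F (fun B => Z `&` p @^-1` [set y] `&` closure B).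
have FG : Filter G.
  apply: filter_from_filter; first by exists setT; exact: filterT.
  move=> B1 B2 FB1 FB2; exists (B1 `&` B2); first exact: filterI.
  by move=> x [Sx /closureI[clB1x clB2x]].
have PG : ProperFilter G.
  have FZ : F Z by apply: filterS FZH => x [].
  by apply: filter_from_proper => B; exact: closed_map_fibre_meets_closure.
have [x [[Zx pxy] clGx]] : (Z `&` p @^-1` [set y]) `&` cluster G !=set0.
  by apply: pfib => //; exists setT => //; exact: filterT.
exists x; split; first by split => //; rewrite /preimage /= pxy.
move=> B N FB Nx.
have [z [[_ clBz] Nz]] : (Z `&` p @^-1` [set y] `&` closure B) `&` N° !=set0.
  by apply: clGx; [exists B|exact: nbhs_interior].
by have [w [Bw Nw]] := clBz _ Nz; exists w.
Qed.

End PerfectMaps.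

Section PerfectIrreducibleMaps.
Context {X Y : topologicalType} (Z : set X) (p : X -> Y).
Hypotheses (oZ : open Z) (hY : hausdorff_space Y) (Xed : extremally_disconnected X).
Hypotheses (pperf : perfect_on Z p) (pirr : irreducible_on Z p).

Let image_onto y : exists2 x, Z x & p x = y.
Proof. by case: pirr => _ onto _; have : (p @` Z) y by rewrite onto. Qed.

Lemma open_preimage_on (V : set Y) : open V -> open (Z `&` p @^-1` V).
Proof.
case: pperf => pc _ _; move: pc; rewrite continuous_open_subspace //.
by move/(continuous_inP _ oZ); apply.
Qed.

Lemma compact_image (K : set X) : K `<=` Z -> compact K -> compact (p @` K).
Proof.
case: pperf => pc _ _ KZ cK.
by apply: continuous_compact => //; exact: continuous_subspaceW pc.
Qed.

Lemma compl_image_sub_interior (O : set X) :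
  open O -> ~` p @` (Z `&` ~` O) `<=` (p @` (Z `&` O))°.
Proof.
case: pperf => _ pcl _ oO.
rewrite -open_subsetE; last first.
  by apply: closed_openC; apply: pcl; exists (~` O); split => //; exact: open_closedC.
move=> y nCy; have [x Zx pxy] := image_onto y.
by exists x => //; split => //; apply: contrapT => nOx; apply: nCy; exists x.
Qed.

Lemma irreducible_fibre_subset (M : set X) : open M -> Z `&` M !=set0 ->
  exists2 x, (Z `&` M) x & Z `&` p @^-1` [set p x] `<=` M.
Proof.
case: pirr => _ _ irr oM [x0 [Zx0 Mx0]].
have [y nCy] : exists y, ~ (p @` (Z `&` ~` M)) y.
  apply: contrapT => all_in_C.
  have CZ : Z `&` ~` M = Z.
    apply: irr; first by exists (~` M); split => //; exact: open_closedC.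
      exact: subIsetl.
    by apply/seteqP; split => // y _; apply: contrapT => nCy; apply: all_in_C; exists y.
  by have [] : (Z `&` ~` M) x0 by rewrite CZ.
have inM z : Z z -> p z = y -> M z.
  by move=> Zz pzy; apply: contrapT => nMz; apply: nCy; exists z.
have [x Zx pxy] := image_onto y.
exists x; first by split => //; exact: inM.
by move=> z [Zz pzx]; apply: inM => //; rewrite pzx.
Qed.

Lemma image_open_sub_closure_interior (O : set X) :
  open O -> p @` (Z `&` O) `<=` closure (p @` (Z `&` O))°.
Proof.
move=> oO _ [x [Zx Ox] <-] N; rewrite nbhsE => -[N' [oN' N'px] N'N].
set M := O `&` (Z `&` p @^-1` N').
have oM : open M by apply: openI => //; exact: open_preimage_on.
have ZMx : (Z `&` M) x by do !split.
have [x' [_ [_ [_ N'px']]] fibre_sub] := irreducible_fibre_subset oM (ex_intro _ x ZMx).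
exists (p x'); split; last exact: N'N.
apply: compl_image_sub_interior => // -[z [Zz nOz] pzx'].
by have [] := fibre_sub z (conj Zz pzx').
Qed.

Lemma rho_KO_CR (K : set X) : KO Z K -> CR (rho p K).
Proof.
move=> [KZ [[O [oO KE]] cK]]; subst K.
have clpK := compact_closed hY (compact_image KZ cK).
split; last exact: compact_image.
apply/seteqP; split; last exact: image_open_sub_closure_interior.
by rewrite [X in _ `<=` X](closure_id _).1 //; apply: closureS; exact: interior_subset.
Qed.

Lemma CR_rho_KO (H : set Y) : CR H -> exists2 K, KO Z K & rho p K = H.
Proof.
move=> [HE cH].
have clH : closed H by rewrite -HE; exact: closed_closure.
set V := Z `&` p @^-1` H°.
have oclV : open (closure V).
  by apply: Xed; apply: open_preimage_on; exact: open_interior.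
have KH : Z `&` closure V `<=` Z `&` p @^-1` H.
  move=> x [Zx clVx]; split => //; apply: contrapT => nHpx.
  have nbhs_nH : nbhs x (Z `&` p @^-1` (~` H)).
    by apply: open_nbhs_nbhs; split => //; apply: open_preimage_on; exact: closed_openC.
  have [w [[_ Hw] [_ nHw]]] := clVx _ nbhs_nH.
  by apply: nHw; exact: interior_subset.
have cK : compact (Z `&` closure V).
  have -> : Z `&` closure V = (Z `&` p @^-1` H) `&` closure V.
    by apply/seteqP; split => [x [Zx clVx]|x [[Zx _] clVx]] //; split => //; exact: KH.
  apply: compact_closedI; last exact: closed_closure.
  exact: perfect_preimage_compact.
exists (Z `&` closure V); first by split; [exact: subIsetl|split=> //; exists (closure V)].
have clpK := compact_closed hY (compact_image (@subIsetl _ _ _) cK).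
apply/seteqP; split; first by move=> _ [x /KH[_ Hx] <-].
rewrite -HE [X in _ `<=` X](closure_id _).1 //; apply: closureS => y Hy.
have [x Zx pxy] := image_onto y.
exists x => //; split => //; apply: subset_closure; split => //.
by rewrite /preimage /= pxy.
Qed.

End PerfectIrreducibleMaps.

Theorem fact3p9 (disp : Order.disp_t) (A : ctbDistrLatticeType disp)
  (Y : topologicalType) (Z : set (Ult A)) (p : Ult A -> Y) :
  complete_BA A ->
  open Z -> dense Z ->
  hausdorff_space Y -> locally_compact [set: Y] ->
  perfect_on Z p -> irreducible_on Z p ->
  rho p @` KO Z = CR.
Proof.
move=> cA oZ _ hY _ pperf pirr.
have Xed := Ult_extremally_disconnected cA.
apply/seteqP; split; first by move=> _ [K KOK <-]; exact: (rho_KO_CR oZ hY pperf pirr).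
by move=> H /(CR_rho_KO oZ hY Xed pperf pirr) [K KOK <-]; exists K.
Qed.
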